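(* Let $U=\{x\in\mathbb R^4:x^2+x^4>0\}$. A smooth covector field $A$ on $U$ satisfies $L_\xi A=0$ for $\xi\in\{e_{12}-e_{14},\,e_{23}+e_{34},\,e_{24},\,e_1,\,e_3,\,e_2-e_4\}$ if and only if there is a real constant $B$ with $$A=\Big(0,\ \frac{B}{x^2+x^4},\ 0,\ \frac{B}{x^2+x^4}\Big).$$
   Context: Work in $\mathbb R^4$ with Galilean (Cartesian) coordinates $x^1,x^2,x^3,x^4$ of Minkowski space (metric $\mathrm{diag}(-1,-1,-1,1)$). A potential on an open set $U\subseteq\mathbb R^4$ is a smooth covector field $A=A_i\,dx^i$; its components $A_i$ are always those with respect to the coordinates $x^i$, even when written as functions of other variables. For a vector field $\xi=\xi^k\partial_k$ the Lie derivative is $(L_\xi A)_i=\xi^k\partial_kA_i+A_k\partial_i\xi^k$. The vector fields used are, by components $(\xi^1,\xi^2,\xi^3,\xi^4)$: $e_1=(1,0,0,0)$, $e_2=(0,1,0,0)$, $e_3=(0,0,1,0)$, $e_4=(0,0,0,1)$, $e_{12}=(-x^2,x^1,0,0)$, $e_{13}=(x^3,0,-x^1,0)$, $e_{23}=(0,-x^3,x^2,0)$, $e_{14}=(x^4,0,0,x^1)$, $e_{24}=(0,x^4,0,x^2)$, $e_{34}=(0,0,x^4,x^3)$. A potential admits a family of vector fields if $L_\xi A=0$ for each $\xi$ in it (equivalently for every element of their linear span). ''Functions'' are smooth real functions; $\mathrm{ch}=\cosh$, $\mathrm{sh}=\sinh$. *)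

From Stdlib Require Import Reals List.
From Coquelicot Require Import Coquelicot.
Open Scope R_scope.

Definition vec : Type := (R * R * R * R)%type.
Definition mkv (a b c d : R) : vec := (a, b, c, d).

Inductive idx : Type := I1 | I2 | I3 | I4.

Definition coord (x : vec) (k : idx) : R :=
  match x with (a, b, c, d) =>
    match k with I1 => a | I2 => b | I3 => c | I4 => d end end.

Definition upd (x : vec) (k : idx) (t : R) : vec :=
  match x with (a, b, c, d) =>
    match k with
    | I1 => (t, b, c, d) | I2 => (a, t, c, d)
    | I3 => (a, b, t, d) | I4 => (a, b, c, t) end end.

Definition partial (k : idx) (f : vec -> R) (x : vec) : R :=
  Derive (fun t => f (upd x k t)) (coord x k).

Fixpoint iter_partial (ks : list idx) (f : vec -> R) : vec -> R :=
  match ks with nil => f | k :: ks' => partial k (iter_partial ks' f) end.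

Definition smooth_on (U : vec -> Prop) (f : vec -> R) : Prop :=
  forall (ks : list idx) (x : vec), U x ->
    (forall k, ex_derive (fun t => iter_partial ks f (upd x k t)) (coord x k))
    /\ continuous (iter_partial ks f) x.

(* A covector field / vector field: its components w.r.t. the x^i *)
Definition field : Type := idx -> vec -> R.

Definition sum4 (g : idx -> R) : R := g I1 + g I2 + g I3 + g I4.

Definition lie (xi A : field) (i : idx) (x : vec) : R :=
  sum4 (fun k => xi k x * partial k (A i) x)
  + sum4 (fun k => A k x * partial i (xi k) x).

Definition mkfield (f1 f2 f3 f4 : vec -> R) : field :=
  fun k => match k with I1 => f1 | I2 => f2 | I3 => f3 | I4 => f4 end.

Definition x1 (x : vec) := coord x I1.
Definition x2 (x : vec) := coord x I2.
Definition x3 (x : vec) := coord x I3.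
Definition x4 (x : vec) := coord x I4.
Definition cst (c : R) : vec -> R := fun _ => c.

Definition e1 : field := mkfield (cst 1) (cst 0) (cst 0) (cst 0).
Definition e2 : field := mkfield (cst 0) (cst 1) (cst 0) (cst 0).
Definition e3 : field := mkfield (cst 0) (cst 0) (cst 1) (cst 0).
Definition e4 : field := mkfield (cst 0) (cst 0) (cst 0) (cst 1).
Definition e12 : field := mkfield (fun x => - x2 x) x1 (cst 0) (cst 0).
Definition e13 : field := mkfield x3 (cst 0) (fun x => - x1 x) (cst 0).
Definition e23 : field := mkfield (cst 0) (fun x => - x3 x) x2 (cst 0).
Definition e14 : field := mkfield x4 (cst 0) (cst 0) x1.
Definition e24 : field := mkfield (cst 0) x4 (cst 0) x2.
Definition e34 : field := mkfield (cst 0) (cst 0) x4 x3.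

Definition fadd (a b : field) : field := fun k x => a k x + b k x.
Definition fsub (a b : field) : field := fun k x => a k x - b k x.

Definition admits (U : vec -> Prop) (A xi : field) : Prop :=
  forall i x, U x -> lie xi A i x = 0.

(* Admissibility of the six vector fields is a system of linear equations in the
   values and first partial derivatives of A at each point.  It forces
   A1 = A3 = 0, A4 = A2, and makes every partial derivative of (x2 + x4) A2
   vanish.  The half-space x2 + x4 > 0 is convex along coordinate lines and any
   two of its points are joined by a chain of coordinate segments inside it, so
   (x2 + x4) A2 is a constant B.  Conversely the explicit potential admits the
   six fields, and the Lie derivative at a point only sees A near that point. *)
From Stdlib Require Import Reals List Lra.
Import ListNotations.
From Coquelicot Require Import Coquelicot.
Open Scope R_scope.

Definition halfspace (x : vec) : Prop := x2 x + x4 x > 0.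

Definition generators : list field :=
  [fsub e12 e14; fadd e23 e34; e24; e1; e3; fsub e2 e4].

Definition potential (B : R) : field :=
  mkfield (cst 0) (fun x => B / (x2 x + x4 x)) (cst 0) (fun x => B / (x2 x + x4 x)).

Lemma upd_upd x k t s : upd (upd x k t) k s = upd x k s.
Proof. now destruct x as [[[a b] c] d]; destruct k. Qed.

Lemma coord_upd x k t : coord (upd x k t) k = t.
Proof. now destruct x as [[[a b] c] d]; destruct k. Qed.

Lemma upd_coord x k : upd x k (coord x k) = x.
Proof. now destruct x as [[[a b] c] d]; destruct k. Qed.

Lemma halfspace_line_locally x k :
  halfspace x -> locally (coord x k) (fun t => halfspace (upd x k t)).
Proof.
intros Hx. assert (Hpos : 0 < x2 x + x4 x) by exact Hx.
exists (mkposreal _ Hpos). intros t Ht.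
unfold ball in Ht; simpl in Ht;
  unfold AbsRing_ball, abs, minus, plus, opp in Ht; simpl in Ht.
apply Rabs_def2 in Ht.
destruct x as [[[a b] c] d]; destruct k; unfold halfspace, x2, x4 in *;
  cbn [upd coord] in *; lra.
Qed.

Lemma halfspace_segment y k t1 t2 t :
  halfspace (upd y k t1) -> halfspace (upd y k t2) ->
  Rmin t1 t2 <= t <= Rmax t1 t2 -> halfspace (upd y k t).
Proof.
destruct y as [[[a b] c] d]; unfold halfspace, x2, x4, Rmin, Rmax.
destruct k; cbn [upd coord]; destruct Rle_dec; lra.
Qed.

Lemma partial_eq_on (U : vec -> Prop) (f g : vec -> R) x k :
  (forall y, U y -> f y = g y) -> locally (coord x k) (fun t => U (upd x k t)) ->
  partial k f x = partial k g x.
Proof.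
intros Hfg HU. apply Derive_ext_loc.
eapply filter_imp; [|exact HU]. intros t Ht. exact (Hfg _ Ht).
Qed.

Lemma lie_eq_on (U : vec -> Prop) (xi A A' : field) i x :
  (forall k y, U y -> A k y = A' k y) ->
  (forall k, locally (coord x k) (fun t => U (upd x k t))) -> U x ->
  lie xi A i x = lie xi A' i x.
Proof.
intros HAA' HU Hx. unfold lie, sum4.
rewrite !(partial_eq_on U (A i) (A' i) x) by auto.
rewrite !(HAA' _ x Hx). reflexivity.
Qed.

Ltac compute_derivatives :=
  repeat match goal with |- context [Derive ?f ?p] =>
    erewrite (is_derive_unique f p) by (auto_derive; first [reflexivity | lra])
  end.

Ltac compute_lie x :=
  destruct x as [[[a b] c] d];
  unfold halfspace, lie, sum4, partial, potential, fsub, fadd, e1, e2, e3, e4, e12, e23, e14,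
    e24, e34, mkfield, x1, x2, x3, x4, cst in *;
  cbn [upd coord] in *; compute_derivatives.

Lemma lie_e1 A i x : lie e1 A i x = partial I1 (A i) x.
Proof. compute_lie x; ring. Qed.

Lemma lie_e3 A i x : lie e3 A i x = partial I3 (A i) x.
Proof. compute_lie x; ring. Qed.

Lemma lie_e2_e4 A i x :
  lie (fsub e2 e4) A i x = partial I2 (A i) x - partial I4 (A i) x.
Proof. compute_lie x; ring. Qed.

Lemma lie_e12_e14_1 A x :
  lie (fsub e12 e14) A I1 x =
  - (x2 x + x4 x) * partial I1 (A I1) x
  + x1 x * (partial I2 (A I1) x - partial I4 (A I1) x) + A I2 x - A I4 x.
Proof. compute_lie x; ring. Qed.

Lemma lie_e12_e14_2 A x :
  lie (fsub e12 e14) A I2 x =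
  - (x2 x + x4 x) * partial I1 (A I2) x
  + x1 x * (partial I2 (A I2) x - partial I4 (A I2) x) - A I1 x.
Proof. compute_lie x; ring. Qed.

Lemma lie_e23_e34_2 A x :
  lie (fadd e23 e34) A I2 x =
  - x3 x * (partial I2 (A I2) x - partial I4 (A I2) x)
  + (x2 x + x4 x) * partial I3 (A I2) x + A I3 x.
Proof. compute_lie x; ring. Qed.

Lemma lie_e24_2 A x :
  lie e24 A I2 x = x4 x * partial I2 (A I2) x + x2 x * partial I4 (A I2) x + A I4 x.
Proof. compute_lie x; ring. Qed.

Lemma potential_admits B xi : In xi generators -> admits halfspace (potential B) xi.
Proof.
intros Hxi i x Hx. simpl in Hxi.
destruct Hxi as [<-|[<-|[<-|[<-|[<-|[<-|[]]]]]]]; destruct i; compute_lie x;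
  first [ring | field; lra].
Qed.

Definition partial_sum24 (k : idx) : R := match k with I2 | I4 => 1 | _ => 0 end.

Lemma is_derive_line_sum24 z k :
  is_derive (fun s => x2 (upd z k s) + x4 (upd z k s)) (coord z k) (partial_sum24 k).
Proof.
destruct z as [[[a b] c] d]; destruct k; unfold x2, x4, partial_sum24; cbn [upd coord];
  auto_derive; first [reflexivity | ring].
Qed.

Section Admissible.

Variables (A : field) (x : vec).
Hypothesis Hlie : forall xi i, In xi generators -> lie xi A i x = 0.

Local Ltac use_generators H :=
  rewrite ?lie_e12_e14_1, ?lie_e12_e14_2, ?lie_e23_e34_2, ?lie_e24_2 in H;
  rewrite <- ?lie_e1, <- ?lie_e3, <- ?lie_e2_e4, ?Hlie in H by (simpl; tauto).

Lemma admissible_A1 : A I1 x = 0.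
Proof.
pose proof (Hlie (fsub e12 e14) I2 ltac:(simpl; tauto)) as H.
use_generators H. lra.
Qed.

Lemma admissible_A3 : A I3 x = 0.
Proof.
pose proof (Hlie (fadd e23 e34) I2 ltac:(simpl; tauto)) as H.
use_generators H. lra.
Qed.

Lemma admissible_A4 : A I4 x = A I2 x.
Proof.
pose proof (Hlie (fsub e12 e14) I1 ltac:(simpl; tauto)) as H.
use_generators H. lra.
Qed.

Lemma admissible_partial_A2 k :
  partial k (A I2) x * (x2 x + x4 x) + A I2 x * partial_sum24 k = 0.
Proof.
pose proof (Hlie e1 I2 ltac:(simpl; tauto)) as H1.
pose proof (Hlie e3 I2 ltac:(simpl; tauto)) as H3.
pose proof (Hlie (fsub e2 e4) I2 ltac:(simpl; tauto)) as H24.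
pose proof (Hlie e24 I2 ltac:(simpl; tauto)) as H.
rewrite lie_e1 in H1; rewrite lie_e3 in H3; rewrite lie_e2_e4 in H24.
rewrite lie_e24_2, admissible_A4 in H.
assert (E42 : partial I4 (A I2) x = partial I2 (A I2) x) by lra.
rewrite E42 in H.
destruct k; unfold partial_sum24; [rewrite H1 | | rewrite H3 | rewrite E42]; lra.
Qed.

End Admissible.

Lemma const_on_segment (U : vec -> Prop) (F : vec -> R) y k t1 t2 :
  (forall z, U z -> is_derive (fun s => F (upd z k s)) (coord z k) 0) ->
  (forall t, Rmin t1 t2 <= t <= Rmax t1 t2 -> U (upd y k t)) ->
  F (upd y k t1) = F (upd y k t2).
Proof.
intros HF HU.
set (f := fun t => F (upd y k t)). change (f t1 = f t2).
assert (Hf : forall t, Rmin t1 t2 <= t <= Rmax t1 t2 -> is_derive f t 0).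
{ intros t Ht. pose proof (HF _ (HU t Ht)) as H. rewrite coord_upd in H.
  eapply is_derive_ext; [|exact H]. intros s. simpl. now rewrite upd_upd. }
destruct (Rle_lt_dec t1 t2) as [Hle|Hlt].
- destruct (Rle_lt_or_eq_dec _ _ Hle) as [Hlt|<-]; [|reflexivity].
  apply eq_is_derive; [|exact Hlt]. intros t Ht; apply Hf.
  rewrite Rmin_left, Rmax_right; lra.
- symmetry. apply eq_is_derive; [|exact Hlt]. intros t Ht; apply Hf.
  rewrite Rmin_right, Rmax_left; lra.
Qed.

Section HalfspaceConstant.

Variable F : vec -> R.
Hypothesis HF : forall z k, halfspace z -> is_derive (fun s => F (upd z k s)) (coord z k) 0.

Lemma halfspace_coordinate_step y k t1 t2 :
  halfspace (upd y k t1) -> halfspace (upd y k t2) -> F (upd y k t1) = F (upd y k t2).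
Proof.
intros H1 H2. apply (const_on_segment halfspace); [exact (fun z => HF z k)|].
intros t Ht. exact (halfspace_segment y k t1 t2 t H1 H2 Ht).
Qed.

Local Ltac step y k t1 t2 :=
  apply (halfspace_coordinate_step y k t1 t2); unfold halfspace, x2, x4; cbn; lra.

(* The intermediate value M := 1 + |d| keeps every vertex of the path in the half-space. *)
Lemma halfspace_constant x : halfspace x -> F x = F (mkv 0 1 0 0).
Proof.
destruct x as [[[a b] c] d]. unfold halfspace, x2, x4. cbn [coord]. intros Hx.
assert (HM : 0 < 1 + Rabs d /\ 0 < 1 + Rabs d + d).
{ pose proof (Rabs_pos d). pose proof (Rle_abs (- d)) as Hd.
  rewrite Rabs_Ropp in Hd. lra. }
set (M := 1 + Rabs d) in *.
transitivity (F (0,b,c,d)); [step (a,b,c,d) I1 a 0|].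
transitivity (F (0,b,0,d)); [step (0,b,c,d) I3 c 0|].
transitivity (F (0,M,0,d)); [step (0,b,0,d) I2 b M|].
transitivity (F (0,M,0,0)); [step (0,M,0,d) I4 d 0|].
step (0,M,0,0) I2 M 1.
Qed.

End HalfspaceConstant.

Lemma admissible_weighted_A2_line_derive (A : field) z k :
  smooth_on halfspace (A I2) ->
  (forall xi i, In xi generators -> lie xi A i z = 0) -> halfspace z ->
  is_derive (fun s => A I2 (upd z k s) * (x2 (upd z k s) + x4 (upd z k s))) (coord z k) 0.
Proof.
intros Hsmooth Hlie Hz.
rewrite <- (admissible_partial_A2 A z Hlie k).
assert (HA2 : is_derive (fun s => A I2 (upd z k s)) (coord z k) (partial k (A I2) z))
  by exact (Derive_correct _ _ (proj1 (Hsmooth nil z Hz) k)).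
pose proof (is_derive_mult _ _ _ _ _ HA2 (is_derive_line_sum24 z k) Rmult_comm) as H.
cbv beta in H. rewrite upd_coord in H. exact H.
Qed.

Theorem mainTheorem18 :
  let U := fun x : vec => x2 x + x4 x > 0 in
  forall A : field,
    (forall i, smooth_on U (A i)) ->
    ((forall xi, In xi [fsub e12 e14; fadd e23 e34; e24; e1; e3; fsub e2 e4] ->
        admits U A xi)
     <->
     exists B : R, forall x, U x ->
       A I1 x = 0 /\ A I2 x = B / (x2 x + x4 x) /\
       A I3 x = 0 /\ A I4 x = B / (x2 x + x4 x)).
Proof.
intros U A Hsmooth. split.
- intros Hadm.
  assert (Hlie : forall x, halfspace x -> forall xi i, In xi generators -> lie xi A i x = 0)
    by (intros x Hx xi i Hin; exact (Hadm xi Hin i x Hx)).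
  set (F := fun x => A I2 x * (x2 x + x4 x)).
  exists (F (mkv 0 1 0 0)). intros x Hx.
  assert (HF : F x = F (mkv 0 1 0 0)).
  { apply halfspace_constant; [|exact Hx]. intros z k Hz.
    exact (admissible_weighted_A2_line_derive A z k (Hsmooth I2) (Hlie z Hz) Hz). }
  rewrite <- HF. unfold F.
  rewrite (admissible_A1 A x), (admissible_A3 A x), (admissible_A4 A x) by auto.
  repeat split; field; apply Rgt_not_eq, Hx.
- intros [B HB] xi Hin i x Hx.
  rewrite (lie_eq_on halfspace xi A (potential B)); auto using halfspace_line_locally.
  + exact (potential_admits B xi Hin i x Hx).
  + intros k y Hy. destruct (HB y Hy) as (? & ? & ? & ?). now destruct k.
Qed.
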